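(* Let $C=p_r\dots p_s$ be a configuration of g-2PATH satisfying the condition of noninterference of extensions (CNI). Then (1) if $(i,j)\in K$ and $i+1\le 0$, then $V(i,j)=V(i+1,j)$; and (2) if $(i,j)\in K$ and $0\le j-1$, then $U(i,j)=U(i,j-1)$.
   Context: Positions are elements of $\mathbb{Z}^2$; with $\epsilon_0=(1,0),\epsilon_1=(0,1),\epsilon_2=(-1,0),\epsilon_3=(0,-1)$, positions $p,p'$ are adjacent if $p'-p$ is some $\epsilon_i$. A configuration of g-2PATH is a sequence $C=p_r\dots p_s$ ($r\le0\le s$) of positions with $p_0=(0,0)$, consecutive positions adjacent, all positions distinct, and $p_l,p_m$ not adjacent whenever $|l-m|\ge2$. For $p\in C$, $\mathrm{bc}_C(p)=(b_0,\dots,b_3)$ with $b_i=1$ iff $p+\epsilon_i\in C$. For fixed $C$ and $r\le i\le0\le j\le s$: $W(i,j)$ is the set of pairs $(x_0,x_1)$ of finite, possibly empty, sequences of positions such that $x_0p_i\dots p_jx_1$ is a configuration $C'$ of g-2PATH (with general at $p_0$) with $\mathrm{bc}_{C'}(p_l)=\mathrm{bc}_C(p_l)$ for all $i\le l\le j$; $U(i,j)$ and $V(i,j)$ are the sets of first, respectively second, components of elements of $W(i,j)$. $\mathrm{NI}(i,j)$ is the statement $W(i,j)=U(i,j)\times V(i,j)$. Define $I=\{(i,j): r\le i-1,\ W(i,j)\text{ infinite},\ W(i-1,j)\text{ finite}\}$, $J=\{(i,j): j+1\le s,\ W(i,j)\text{ infinite},\ W(i,j+1)\text{ finite}\}$,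 $K=\{(i,j): W(i,j)\text{ finite}\}$ (all with $r\le i\le0\le j\le s$). $C$ satisfies CNI if $\mathrm{NI}(i,j)$ holds for every $(i,j)\in I\cup J\cup K$. *)

From mathcomp Require Import all_boot all_order all_algebra.
Set Implicit Arguments. Unset Strict Implicit. Unset Printing Implicit Defensive.
Import Order.TTheory GRing.Theory Num.Theory.
Local Open Scope ring_scope.

Definition pos := (int * int)%type.

Definition pos0 : pos := (0, 0).

Definition padd (p q : pos) : pos := (p.1 + q.1, p.2 + q.2).

Definition eps (d : 'I_4) : pos :=
  match nat_of_ord d with
  | 0%N => (1, 0)
  | 1%N => (0, 1)
  | 2%N => (-1, 0)
  | _ => (0, -1)
  end.

Definition adj (p p' : pos) : bool := [exists d : 'I_4, p' == padd p (eps d)].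

(** A finite sequence of positions q_0 ... q_(n-1) satisfying the path
    conditions of g-2PATH (indices shifted so they start at 0). *)
Definition path_ok (s : seq pos) : Prop :=
  [/\ (forall n : nat, (n.+1 < size s)%N -> adj (nth pos0 s n) (nth pos0 s n.+1)),
      uniq s &
      (forall n m : nat, (n < size s)%N -> (m < size s)%N -> (n.+2 <= m)%N ->
         ~~ adj (nth pos0 s n) (nth pos0 s m))].

(** A configuration C = p_r ... p_s of g-2PATH is represented by the list
    [l = p_r; ...; p_s] together with k = -r, so that p_m = nth l (k + m),
    i.e. the general p_0 is at list position k. *)
Definition is_config (l : seq pos) (k : nat) : Prop :=
  [/\ (k < size l)%N, nth pos0 l k = pos0 & path_ok l].

(** Indices i, j with r <= i <= 0 <= j <= s are represented by list positions
    a = k + i and b = k + j, so a <= k <= b < size l. *)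
Definition segment (l : seq pos) (a b : nat) : seq pos :=
  take (b - a).+1 (drop a l).

(** W(i,j): pairs (x0,x1) such that C' = x0 p_i..p_j x1 is a configuration
    of g-2PATH with general at p_0 and bc_C'(p_m) = bc_C(p_m) for i <= m <= j.
    (In C' the general p_0 sits at list position size x0 + (k - a), and it is
    automatically (0,0); so only the path conditions need to be imposed.)
    bc_C'(p) = bc_C(p) means: for each direction d, p + eps_d is in C' iff it
    is in C. *)
Definition W (l : seq pos) (k a b : nat) (x : seq pos * seq pos) : Prop :=
  let C' := x.1 ++ segment l a b ++ x.2 in
  path_ok C' /\
  (forall m : nat, (a <= m <= b)%N -> forall d : 'I_4,
     (padd (nth pos0 l m) (eps d) \in C') = (padd (nth pos0 l m) (eps d) \in l)).

Definition U (l : seq pos) (k a b : nat) (x0 : seq pos) : Prop :=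
  exists x1, W l k a b (x0, x1).

Definition V (l : seq pos) (k a b : nat) (x1 : seq pos) : Prop :=
  exists x0, W l k a b (x0, x1).

Definition NI (l : seq pos) (k a b : nat) : Prop :=
  forall x0 x1, W l k a b (x0, x1) <-> (U l k a b x0 /\ V l k a b x1).

Definition finite_pairs (P : seq pos * seq pos -> Prop) : Prop :=
  exists s : seq (seq pos * seq pos), forall x, P x -> x \in s.

Definition Wfin (l : seq pos) (k a b : nat) : Prop := finite_pairs (W l k a b).

Definition in_range (l : seq pos) (k a b : nat) : Prop :=
  (a <= k)%N /\ (k <= b)%N /\ (b < size l)%N.

Definition inI (l : seq pos) (k a b : nat) : Prop :=
  [/\ in_range l k a b, (1 <= a)%N, ~ Wfin l k a b & Wfin l k a.-1 b].

Definition inJ (l : seq pos) (k a b : nat) : Prop :=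
  [/\ in_range l k a b, (b.+1 < size l)%N, ~ Wfin l k a b & Wfin l k a b.+1].

Definition inK (l : seq pos) (k a b : nat) : Prop :=
  in_range l k a b /\ Wfin l k a b.

Definition CNI (l : seq pos) (k : nat) : Prop :=
  forall a b : nat, inI l k a b \/ inJ l k a b \/ inK l k a b -> NI l k a b.

From mathcomp Require Import all_boot all_order all_algebra.
From mathcomp Require Import zify.
From Stdlib Require Import Classical.

Set Implicit Arguments.
Unset Strict Implicit.

(* Shrinking the segment on the left loses no right extension: p_i simply
   moves into x0.  Conversely, when W(i,j) is finite the pair (i+1,j) lies in
   I or K, so NI(i+1,j) holds by CNI; as the prefix p_r...p_i of C itself lies
   in U(i+1,j), every x1 in V(i+1,j) combines with it into a configuration
   p_r...p_j x1.  In a g-2PATH configuration the occupied neighbours of a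
   position are exactly its predecessor and successor on the path, and those
   of p_i are the same in C and in p_r...p_j x1, so the bond condition at p_i
   holds and x1 lies in V(i,j).  The second claim is the mirror image. *)

Lemma adj_sym (p q : pos) : adj p q -> adj q p.
Proof.
case: p => x y /existsP[[[|[|[|[|d]]]] lt_d4] /eqP ->] //; apply/existsP.
- by exists (Ordinal (isT : (2 < 4)%N)); rewrite /padd /eps /=; apply/eqP; congr pair; lia.
- by exists (Ordinal (isT : (3 < 4)%N)); rewrite /padd /eps /=; apply/eqP; congr pair; lia.
- by exists (Ordinal (isT : (0 < 4)%N)); rewrite /padd /eps /=; apply/eqP; congr pair; lia.
- by exists (Ordinal (isT : (1 < 4)%N)); rewrite /padd /eps /=; apply/eqP; congr pair; lia.
Qed.

Lemma adj_irr (p : pos) : ~~ adj p p.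
Proof.
case: p => x y; apply/existsP => -[[[|[|[|[|d]]]] lt_d4] /eqP] //.
all: by rewrite /padd /eps /= => -[]; lia.
Qed.

Lemma adj_eps (p : pos) (d : 'I_4) : adj p (padd p (eps d)).
Proof. by apply/existsP; exists d. Qed.

Definition window (s : seq pos) (n : nat) : seq pos := drop n.-1 (take n.+2 s).

Lemma mem_adj_path (s : seq pos) (n : nat) (y : pos) :
  path_ok s -> (n < size s)%N -> adj (nth pos0 s n) y ->
  (y \in s) = (y \in window s n).
Proof.
case=> _ _ far_nadj lt_ns adj_y; apply/idP/idP; last by move/mem_drop/mem_take.
case/(nthP pos0) => m lt_ms def_y; rewrite -{}def_y in adj_y *.
have near: (n <= m.+1 <= n.+2)%N.
  case: (ltnP m.+1 n) => [lt_mn|le_nm].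
    by move: (far_nadj m n lt_ms lt_ns lt_mn); rewrite (adj_sym adj_y).
  case: (ltnP n.+1 m) => [lt_nm|le_mn].
    by move: (far_nadj n m lt_ns lt_ms lt_nm); rewrite adj_y.
  by apply/andP; split.
have ->: nth pos0 s m = nth pos0 (window s n) (m - n.-1).
  by rewrite nth_drop nth_take; [congr nth|]; lia.
by apply: mem_nth; rewrite size_drop size_take; case: ifP; lia.
Qed.

Lemma mem_adj_window (s1 s2 : seq pos) (n1 n2 : nat) (y : pos) :
  path_ok s1 -> path_ok s2 -> (n1 < size s1)%N -> (n2 < size s2)%N ->
  nth pos0 s1 n1 = nth pos0 s2 n2 -> window s1 n1 = window s2 n2 ->
  adj (nth pos0 s1 n1) y -> (y \in s1) = (y \in s2).
Proof.
move=> ok1 ok2 lt1 lt2 eq_nth eq_win adj_y.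
rewrite (mem_adj_path ok1 lt1 adj_y) eq_win (mem_adj_path ok2 lt2) //.
by rewrite -eq_nth.
Qed.

Lemma window_take_cat (s x : seq pos) (m n : nat) :
  (n.+2 <= m)%N -> (m <= size s)%N -> window (take m s ++ x) n = window s n.
Proof.
by move=> le_nm le_ms; rewrite /window takel_cat ?take_takel // size_takel.
Qed.

Lemma window_cat_drop (x s : seq pos) (a n : nat) :
  (0 < n)%N -> window (x ++ drop a s) (size x + n) = window s (a + n).
Proof.
move=> n_gt0; rewrite /window take_cat ifN; last by lia.
rewrite drop_cat ifN; last by lia.
rewrite take_drop drop_drop; congr drop; [lia | congr take; lia].
Qed.

Lemma take_segment (l : seq pos) (a b : nat) :
  (a <= b)%N -> take a l ++ segment l a b = take b.+1 l.
Proof. by move=> le_ab; rewrite /segment -takeD; congr take; lia. Qed.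

Lemma segment_drop (l : seq pos) (a b : nat) :
  (a <= b)%N -> segment l a b ++ drop b.+1 l = drop a l.
Proof.
move=> le_ab; have -> : b.+1 = (b - a).+1 + a by lia.
by rewrite -drop_drop cat_take_drop.
Qed.

Lemma segment_cons (l : seq pos) (a b : nat) :
  (a < b)%N -> (b < size l)%N -> segment l a b = nth pos0 l a :: segment l a.+1 b.
Proof.
move=> lt_ab lt_bl; rewrite /segment (drop_nth pos0); last by lia.
by have -> : b - a = (b - a.+1).+1 by lia.
Qed.

Lemma segment_rcons (l : seq pos) (a b : nat) :
  (a <= b)%N -> (b.+1 < size l)%N ->
  segment l a b.+1 = rcons (segment l a b) (nth pos0 l b.+1).
Proof.
move=> le_ab lt_bl; rewrite /segment.
rewrite (take_nth pos0) ?nth_drop; last by rewrite size_drop; lia.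
have -> : b.+1 - a = (b - a).+1 by lia.
by have -> : a + (b - a).+1 = b.+1 by lia.
Qed.

Section Extensions.

Variables (l : seq pos) (k : nat).

Lemma W_self (a b : nat) :
  path_ok l -> (a <= b)%N -> W l k a b (take a l, drop b.+1 l).
Proof. by move=> ok_l le_ab; rewrite /W /= segment_drop // cat_take_drop. Qed.

Lemma W_shrink_left (a b : nat) x0 x1 :
  (a < b)%N -> (b < size l)%N ->
  W l k a b (x0, x1) -> W l k a.+1 b (rcons x0 (nth pos0 l a), x1).
Proof.
move=> lt_ab lt_bl; rewrite /W /= segment_cons // cat_rcons => -[ok bc].
by split=> // m /andP[lt_am le_mb]; apply: bc; rewrite le_mb ltnW.
Qed.

Lemma W_shrink_right (a b : nat) x0 x1 :
  (a <= b)%N -> (b.+1 < size l)%N ->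
  W l k a b.+1 (x0, x1) -> W l k a b (x0, nth pos0 l b.+1 :: x1).
Proof.
move=> le_ab lt_bl; rewrite /W /= segment_rcons // cat_rcons => -[ok bc].
by split=> // m /andP[le_am le_mb]; apply: bc; rewrite le_am leqW.
Qed.

Lemma W_extend_left (a b : nat) x1 :
  path_ok l -> (a < b)%N -> (b < size l)%N ->
  W l k a.+1 b (take a.+1 l, x1) -> W l k a b (take a l, x1).
Proof.
move=> ok_l lt_ab lt_bl; have le_ab := ltnW lt_ab.
rewrite /W /= !catA !take_segment // => -[ok bc].
split=> // m /andP[le_am le_mb] d.
have [->|ne_ma] := eqVneq m a; last by apply: bc; lia.
have nth_a : nth pos0 (take b.+1 l ++ x1) a = nth pos0 l a.
  by rewrite nth_cat size_takel ?ifT ?nth_take //; lia.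
apply: (mem_adj_window (n1 := a) (n2 := a) ok ok_l) => //.
- by rewrite size_cat size_takel; lia.
- exact: ltn_trans lt_bl.
- exact: window_take_cat.
- by rewrite nth_a adj_eps.
Qed.

Lemma W_extend_right (a b : nat) x0 :
  path_ok l -> (a <= b)%N -> (b.+1 < size l)%N ->
  W l k a b (x0, drop b.+1 l) -> W l k a b.+1 (x0, drop b.+2 l).
Proof.
move=> ok_l le_ab lt_bl; have le_ab1 := leqW le_ab.
rewrite /W /= !segment_drop // => -[ok bc].
split=> // m /andP[le_am le_mb] d.
have [->|ne_mb] := eqVneq m b.+1; last by apply: bc; lia.
have nth_b : nth pos0 (x0 ++ drop a l) (size x0 + (b.+1 - a)) = nth pos0 l b.+1.
  by rewrite nth_cat ltnNge leq_addr /= nth_drop; congr nth; lia.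
apply: (mem_adj_window (n1 := size x0 + (b.+1 - a)) (n2 := b.+1) ok ok_l) => //.
- by rewrite size_cat size_drop; lia.
- by rewrite window_cat_drop ?subn_gt0 // subnKC.
- by rewrite nth_b adj_eps.
Qed.

Lemma CNI_NI_left (a b : nat) :
  CNI l k -> in_range l k a.+1 b -> Wfin l k a b -> NI l k a.+1 b.
Proof.
move=> cni range fin; apply: cni.
by have [fin'|infin'] := classic (Wfin l k a.+1 b); [right; right | left].
Qed.

Lemma CNI_NI_right (a b : nat) :
  CNI l k -> in_range l k a b -> (b.+1 < size l)%N -> Wfin l k a b.+1 -> NI l k a b.
Proof.
move=> cni range lt_bl fin; apply: cni.
by have [fin'|infin'] := classic (Wfin l k a b); [right; right | right; left].
Qed.

End Extensions.

Theorem lemma6 (l : seq pos) (k : nat) :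
  is_config l k -> CNI l k ->
  (forall a b : nat, inK l k a b -> (a.+1 <= k)%N ->
     forall x1, V l k a b x1 <-> V l k a.+1 b x1) /\
  (forall a b : nat, inK l k a b -> (k < b)%N ->
     forall x0, U l k a b x0 <-> U l k a b.-1 x0).
Proof.
move=> [_ _ ok_l] cni; split.
- move=> a b [[le_ak [le_kb lt_bl]] fin] lt_ak x1; have lt_ab : (a < b)%N by lia.
  split=> [[x0 W_ab]|V1]; first by exists (rcons x0 (nth pos0 l a)); exact: W_shrink_left.
  have range : in_range l k a.+1 b by [].
  have /(_ (take a.+1 l) x1) [_ W1] := CNI_NI_left cni range fin.
  exists (take a l); apply: W_extend_left => //; apply: W1; split=> //.
  by exists (drop b.+1 l); apply: W_self.
- move=> a b + lt_kb; case: b lt_kb => // b lt_kb [[le_ak [_ lt_bl]] fin] x0 /=.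
  have le_ab : (a <= b)%N by lia.
  split=> [[x1 W_ab]|U0]; first by exists (nth pos0 l b.+1 :: x1); exact: W_shrink_right.
  have range : in_range l k a b by split=> //; split=> //; apply: ltnW.
  have /(_ x0 (drop b.+1 l)) [_ W0] := CNI_NI_right cni range lt_bl fin.
  exists (drop b.+2 l); apply: W_extend_right => //; apply: W0; split=> //.
  by exists (take a l); apply: W_self.
Qed.
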